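(* For every integer $d\ge1$ there exists a hypergraph $H$ of separated $d$-intervals with $\nu(H)=1$ and $\tau(H)=\tau^*(H)=d$.
   Context: Fix $d$ pairwise disjoint copies $L_1,\dots,L_d$ of the real line. A separated $d$-interval is a set $h=h^1\cup\dots\cup h^d$ where each $h^j$ is either empty or a closed interval in $L_j$. A hypergraph of separated $d$-intervals is a finite family of separated $d$-intervals, regarded as a hypergraph on vertex set $L_1\cup\dots\cup L_d$. $\nu(H)$ is the maximum size of a set of pairwise disjoint edges; $\tau(H)$ the minimum size of a set of points meeting every edge; $\tau^*(H)$ the minimum of $\sum_v g(v)$ over finitely supported $g\ge0$ on the vertices with $\sum_{v\in h}g(v)\ge1$ for all edges $h$. *)

From Stdlib Require Import Reals List.
Import ListNotations.
Open Scope R_scope.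

(* A vertex: a point x on the line L_j, encoded as (j, x) with j < d
   (lines are indexed 0..d-1). *)
Definition point : Type := (nat * R)%type.

(* A separated d-interval: for each line index j, either None (h^j empty)
   or Some (a, b) meaning the closed interval [a, b] in L_j. *)
Definition sepint : Type := nat -> option (R * R).

Definition is_sep_dint (d : nat) (h : sepint) : Prop :=
  forall j a b, h j = Some (a, b) -> a <= b.

Definition mem_sep (d : nat) (p : point) (h : sepint) : Prop :=
  (fst p < d)%nat /\
  exists a b, h (fst p) = Some (a, b) /\ a <= snd p <= b.

Definition is_hypergraph (d : nat) (H : list sepint) : Prop :=
  Forall (is_sep_dint d) H.

Definition disjoint_edges (d : nat) (h1 h2 : sepint) : Prop :=
  forall p, ~ (mem_sep d p h1 /\ mem_sep d p h2).

Definition is_matching (d : nat) (H M : list sepint) : Prop :=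
  incl M H /\ NoDup M /\ ForallOrdPairs (disjoint_edges d) M.

Definition nu_eq (d : nat) (H : list sepint) (k : nat) : Prop :=
  (exists M, is_matching d H M /\ length M = k) /\
  (forall M, is_matching d H M -> (length M <= k)%nat).

Definition is_transversal (d : nat) (H : list sepint) (T : list point) : Prop :=
  forall h, In h H -> exists p, In p T /\ mem_sep d p h.

Definition tau_eq (d : nat) (H : list sepint) (k : nat) : Prop :=
  (exists T, is_transversal d H T /\ length T = k) /\
  (forall T, is_transversal d H T -> (k <= length T)%nat).

(* A finitely supported nonnegative weight function g on vertices,
   given as a list of (vertex, weight) pairs (g(v) = sum of weights
   attached to v). *)
Definition weight_of (d : nat) (g : list (point * R)) (h : sepint) : R :=
  fold_right Rplus 0
    (map snd (filter (fun pw =>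
       if Nat.ltb (fst (fst pw)) d then
         match h (fst (fst pw)) with
         | Some (a, b) =>
             if Rle_dec a (snd (fst pw)) then
               if Rle_dec (snd (fst pw)) b then true else false
             else false
         | None => false
         end
       else false) g)).

Definition total_weight (g : list (point * R)) : R :=
  fold_right Rplus 0 (map snd g).

Definition is_frac_cover (d : nat) (H : list sepint) (g : list (point * R)) : Prop :=
  Forall (fun pw => 0 <= snd pw) g /\
  (forall h, In h H -> 1 <= weight_of d g h).

Definition tau_star_eq (d : nat) (H : list sepint) (t : R) : Prop :=
  (exists g, is_frac_cover d H g /\ total_weight g = t) /\
  (forall g, is_frac_cover d H g -> t <= total_weight g).

From Stdlib Require Import Reals List Lia Lra.
Import ListNotations.
Open Scope R_scope.

(* The hypergraph: 2d edges E_0, ..., E_(2d-1), each meeting every line L_j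
   in a unit interval [s, s+1] with s a natural number, the "slot" of the
   edge on that line.  On L_j the edges are laid out in the zigzag order
     E_j, E_(j+1), E_(j-1), E_(j+2), E_(j-2), ..., E_(j+d)   (indices mod 2d)
   occupying the slots 0, 1, ..., 2d-1.  Two edges are neighbours in this
   order exactly when the sum of their indices is 2j or 2j+1 (mod 2d).
   - Every residue mod 2d has the form 2j or 2j+1 with j < d, so any two
     edges are neighbours on some line, where their unit intervals touch:
     the family is intersecting, hence nu = 1.
   - Slots on a line are pairwise distinct, so a point lies in at most two
     edges; double counting gives  2d = |H| <= 2 tau*,  i.e.  tau* >= d.
   - Pairing E_i with E_(d+i) (index sum 2i+d) gives a transversal of size
     d, and tau* <= tau always, so  d <= tau* <= tau <= d. *)

Lemma sum_map_plus {A} (f g : A -> R) (l : list A) :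
  fold_right Rplus 0 (map (fun x => f x + g x) l) =
  fold_right Rplus 0 (map f l) + fold_right Rplus 0 (map g l).
Proof. induction l as [|a l IH]; simpl; [ring | rewrite IH; ring]. Qed.

Lemma sum_map_indicator {A} (f : A -> bool) (c : R) (l : list A) :
  fold_right Rplus 0 (map (fun x => if f x then c else 0) l) =
  c * INR (length (filter f l)).
Proof.
  induction l as [|a l IH]; cbn [map fold_right filter length]; [simpl; ring|].
  destruct (f a); cbn [filter length]; rewrite IH; [rewrite S_INR|]; ring.
Qed.

Lemma sum_map_ge_length {A} (f : A -> R) (l : list A) :
  (forall x, In x l -> 1 <= f x) -> INR (length l) <= fold_right Rplus 0 (map f l).
Proof.
  induction l as [|a l IH]; intros Hf; cbn [map fold_right length]; [simpl; lra|].
  rewrite S_INR.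
  assert (Ha : 1 <= f a) by (apply Hf; left; reflexivity).
  assert (Hl : INR (length l) <= fold_right Rplus 0 (map f l))
    by (apply IH; intros x Hx; apply Hf; right; exact Hx).
  lra.
Qed.

Definition memb (d : nat) (h : sepint) (p : point) : bool :=
  if Nat.ltb (fst p) d then
    match h (fst p) with
    | Some (a, b) =>
        if Rle_dec a (snd p) then if Rle_dec (snd p) b then true else false
        else false
    | None => false
    end
  else false.

Lemma memb_spec (d : nat) (h : sepint) (p : point) :
  memb d h p = true <-> mem_sep d p h.
Proof.
  destruct p as [j x]; unfold memb, mem_sep; simpl.
  destruct (Nat.ltb_spec j d) as [Hj|Hj].
  - destruct (h j) as [[a b]|]; split.
    + destruct (Rle_dec a x); destruct (Rle_dec x b); try discriminate.
      intros _; split; [exact Hj|]. exists a, b; auto.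
    + intros [_ [a' [b' [Heq Hx]]]]. injection Heq as Ha Hb; subst a' b'.
      destruct (Rle_dec a x); destruct (Rle_dec x b); auto; lra.
    + discriminate.
    + intros [_ [a' [b' [Heq _]]]]; discriminate.
  - split; [discriminate|]. intros [Hj' _]; lia.
Qed.

Lemma weight_of_memb (d : nat) (g : list (point * R)) (h : sepint) :
  weight_of d g h = fold_right Rplus 0 (map snd (filter (fun pw => memb d h (fst pw)) g)).
Proof. reflexivity. Qed.

Lemma weight_cons (d : nat) (pw : point * R) (g : list (point * R)) (h : sepint) :
  weight_of d (pw :: g) h = (if memb d h (fst pw) then snd pw else 0) + weight_of d g h.
Proof.
  rewrite !weight_of_memb; cbn [filter].
  destruct (memb d h (fst pw)); cbn [map fold_right]; [reflexivity | ring].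
Qed.

Lemma weight_nonneg (d : nat) (g : list (point * R)) (h : sepint) :
  Forall (fun pw => 0 <= snd pw) g -> 0 <= weight_of d g h.
Proof.
  induction 1 as [|pw g Hpw _ IH]; [unfold weight_of; simpl; lra|].
  rewrite weight_cons; destruct (memb d h (fst pw)); lra.
Qed.

Lemma weight_ge_member (d : nat) (g : list (point * R)) (h : sepint) (pw : point * R) :
  Forall (fun pw => 0 <= snd pw) g -> In pw g -> mem_sep d (fst pw) h ->
  snd pw <= weight_of d g h.
Proof.
  intros Hg Hin Hmem. apply memb_spec in Hmem.
  induction Hg as [|pw' g Hpw' Hg IH]; [destruct Hin|].
  rewrite weight_cons. pose proof (weight_nonneg d g h Hg).
  destruct Hin as [<-|Hin].
  - rewrite Hmem; lra.
  - specialize (IH Hin). destruct (memb d h (fst pw')); lra.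
Qed.

Lemma nu_intersecting (d : nat) (H : list sepint) (h0 : sepint) :
  In h0 H ->
  (forall h1 h2, In h1 H -> In h2 H -> exists p, mem_sep d p h1 /\ mem_sep d p h2) ->
  nu_eq d H 1.
Proof.
  intros Hh0 Hmeet. split.
  - exists [h0]. split; [|reflexivity]. split; [|split].
    + intros x [<-|[]]; exact Hh0.
    + constructor; [intros []|constructor].
    + repeat constructor.
  - intros M [Hincl [_ Hpairs]].
    destruct M as [|h1 [|h2 M]]; simpl; [lia|lia|exfalso].
    inversion Hpairs as [|? ? Hfirst _]; subst.
    inversion Hfirst as [|? ? Hdisj _]; subst.
    destruct (Hmeet h1 h2) as [p Hp]; [apply Hincl; simpl; auto ..|].
    exact (Hdisj p Hp).
Qed.

Definition indicator (T : list point) : list (point * R) := map (fun p => (p, 1)) T.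

Lemma total_weight_indicator (T : list point) :
  total_weight (indicator T) = INR (length T).
Proof.
  induction T as [|p T IH]; [reflexivity|].
  unfold total_weight, indicator in *; cbn [map fold_right snd length].
  rewrite IH, S_INR; ring.
Qed.

Lemma indicator_frac_cover (d : nat) (H : list sepint) (T : list point) :
  is_transversal d H T -> is_frac_cover d H (indicator T).
Proof.
  intros HT.
  assert (Hnn : Forall (fun pw => 0 <= snd pw) (indicator T)).
  { apply Forall_forall; intros pw Hpw. apply in_map_iff in Hpw.
    destruct Hpw as [p [<- _]]; simpl; lra. }
  split; [exact Hnn|].
  intros h Hh. destruct (HT h Hh) as [p [Hp Hmem]].
  apply (weight_ge_member d (indicator T) h (p, 1)); auto.
  apply (in_map (fun p => (p, 1))); exact Hp.
Qed.

Lemma sum_weights_le_degree (d k : nat) (H : list sepint) (g : list (point * R)) :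
  (forall p, (length (filter (fun h => memb d h p) H) <= k)%nat) ->
  Forall (fun pw => 0 <= snd pw) g ->
  fold_right Rplus 0 (map (weight_of d g) H) <= INR k * total_weight g.
Proof.
  intros Hdeg. induction 1 as [|pw g Hpw _ IH].
  - assert (Hzero : forall l : list sepint,
               fold_right Rplus 0 (map (weight_of d []) l) = 0).
    { induction l as [|h l IHl]; simpl; [reflexivity|].
      rewrite IHl; unfold weight_of; simpl; ring. }
    rewrite Hzero; unfold total_weight; simpl; lra.
  - rewrite (map_ext _ _ (weight_cons d pw g)), sum_map_plus, sum_map_indicator.
    pose proof (le_INR _ _ (Hdeg (fst pw))) as Hk.
    assert (snd pw * INR (length (filter (fun h => memb d h (fst pw)) H))
            <= snd pw * INR k) by (apply Rmult_le_compat_l; assumption).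
    unfold total_weight in *; simpl; lra.
Qed.

Lemma frac_cover_degree_bound (d k : nat) (H : list sepint) (g : list (point * R)) :
  (forall p, (length (filter (fun h => memb d h p) H) <= k)%nat) ->
  is_frac_cover d H g -> INR (length H) <= INR k * total_weight g.
Proof.
  intros Hdeg [Hnn Hcov].
  pose proof (sum_map_ge_length (weight_of d g) H Hcov).
  pose proof (sum_weights_le_degree d k H g Hdeg Hnn). lra.
Qed.

Lemma tau_tau_star_sandwich (d t : nat) (H : list sepint) (T : list point) :
  is_transversal d H T -> length T = t ->
  (forall g, is_frac_cover d H g -> INR t <= total_weight g) ->
  tau_eq d H t /\ tau_star_eq d H (INR t).
Proof.
  intros HT Hlen Hlb. split; split.
  - exists T; auto.
  - intros T' HT'. apply INR_le. rewrite <- total_weight_indicator.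
    apply Hlb, indicator_frac_cover, HT'.
  - exists (indicator T). split; [apply indicator_frac_cover, HT|].
    rewrite total_weight_indicator, Hlen; reflexivity.
  - exact Hlb.
Qed.

Definition offset (d j u : nat) : nat :=
  if Nat.leb j u then (u - j)%nat else (u + 2*d - j)%nat.

(* Zigzag slots: offsets 0, 1, 2d-1, 2, 2d-2, ..., d go to slots 0, 1, ..., 2d-1. *)
Definition zigzag (d k : nat) : nat :=
  if Nat.eqb k 0 then 0%nat else if Nat.leb k d then (2*k - 1)%nat else (4*d - 2*k)%nat.

Definition slot (d j u : nat) : nat := zigzag d (offset d j u).

Lemma offset_cases (d j u : nat) :
  ((j <= u)%nat /\ offset d j u = (u - j)%nat) \/
  ((u < j)%nat /\ offset d j u = (u + 2*d - j)%nat).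
Proof. unfold offset; destruct (Nat.leb_spec j u); [left|right]; auto. Qed.

Lemma zigzag_cases (d k : nat) :
  (k = 0%nat /\ zigzag d k = 0%nat) \/
  ((1 <= k <= d)%nat /\ zigzag d k = (2*k - 1)%nat) \/
  ((d < k)%nat /\ zigzag d k = (4*d - 2*k)%nat).
Proof.
  unfold zigzag; destruct (Nat.eqb_spec k 0); [left; auto|].
  destruct (Nat.leb_spec k d); right; [left|right]; split; auto; lia.
Qed.

Lemma slot_injective (d j u v : nat) :
  (j < d)%nat -> (u < 2*d)%nat -> (v < 2*d)%nat -> slot d j u = slot d j v -> u = v.
Proof.
  unfold slot; intros.
  destruct (offset_cases d j u) as [[? ?]|[? ?]];
  destruct (offset_cases d j v) as [[? ?]|[? ?]];
  destruct (zigzag_cases d (offset d j u)) as [[? ?]|[[? ?]|[? ?]]];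
  destruct (zigzag_cases d (offset d j v)) as [[? ?]|[[? ?]|[? ?]]]; lia.
Qed.

Lemma slot_neighbours (d j u v : nat) :
  (j < d)%nat -> (u < 2*d)%nat -> (v < 2*d)%nat ->
  ((2*j <= u + v <= 2*j + 1)%nat \/ (2*j + 2*d <= u + v <= 2*j + 1 + 2*d)%nat) ->
  (slot d j u <= slot d j v + 1)%nat /\ (slot d j v <= slot d j u + 1)%nat.
Proof.
  unfold slot; intros.
  destruct (offset_cases d j u) as [[? ?]|[? ?]];
  destruct (offset_cases d j v) as [[? ?]|[? ?]];
  destruct (zigzag_cases d (offset d j u)) as [[? ?]|[[? ?]|[? ?]]];
  destruct (zigzag_cases d (offset d j v)) as [[? ?]|[[? ?]|[? ?]]]; lia.
Qed.

Definition meet_line (d u v : nat) : nat :=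
  Nat.div (if Nat.ltb (u + v) (2*d) then u + v else u + v - 2*d) 2.

Lemma meet_line_spec (d u v : nat) :
  (u < 2*d)%nat -> (v < 2*d)%nat ->
  (meet_line d u v < d)%nat /\
  ((2 * meet_line d u v <= u + v <= 2 * meet_line d u v + 1)%nat \/
   (2 * meet_line d u v + 2*d <= u + v <= 2 * meet_line d u v + 1 + 2*d)%nat).
Proof.
  intros Hu Hv. unfold meet_line.
  set (s := (if Nat.ltb (u + v) (2*d) then u + v else u + v - 2*d)%nat).
  assert (Hs : (s = u + v /\ u + v < 2*d \/ s + 2*d = u + v /\ 2*d <= u + v)%nat).
  { unfold s; destruct (Nat.ltb_spec (u + v) (2*d)); lia. }
  pose proof (Nat.div_mod s 2 ltac:(lia)).
  pose proof (Nat.mod_upper_bound s 2 ltac:(lia)).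
  lia.
Qed.

Definition zigzag_edge (d u : nat) : sepint :=
  fun j => Some (INR (slot d j u), INR (slot d j u) + 1).

Definition zigzag_hypergraph (d : nat) : list sepint :=
  map (zigzag_edge d) (seq 0 (2*d)).

Lemma in_zigzag_hypergraph (d : nat) (h : sepint) :
  In h (zigzag_hypergraph d) <-> exists u, h = zigzag_edge d u /\ (u < 2*d)%nat.
Proof.
  unfold zigzag_hypergraph; rewrite in_map_iff. split.
  - intros [u [<- Hu]]; apply in_seq in Hu; exists u; split; [reflexivity | lia].
  - intros [u [-> Hu]]; exists u; split; [reflexivity | apply in_seq; lia].
Qed.

Lemma zigzag_is_hypergraph (d : nat) : is_hypergraph d (zigzag_hypergraph d).
Proof.
  apply Forall_forall; intros h Hh. apply in_zigzag_hypergraph in Hh.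
  destruct Hh as [u [-> _]]. intros j a b Heq. injection Heq as <- <-. lra.
Qed.

(* The common point of edges u and v: the touching endpoint on the meet line. *)
Definition meet_point (d u v : nat) : point :=
  let j := meet_line d u v in (j, INR (Nat.max (slot d j u) (slot d j v))).

Lemma meet_point_mem (d u v : nat) :
  (u < 2*d)%nat -> (v < 2*d)%nat ->
  mem_sep d (meet_point d u v) (zigzag_edge d u) /\
  mem_sep d (meet_point d u v) (zigzag_edge d v).
Proof.
  intros Hu Hv. destruct (meet_line_spec d u v Hu Hv) as [Hj Hsum].
  destruct (slot_neighbours d _ u v Hj Hu Hv Hsum) as [Huv Hvu].
  unfold meet_point, mem_sep, zigzag_edge; simpl.
  assert (Hendpoint : forall a b, (a <= b + 1)%nat -> (b <= a + 1)%nat ->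
            INR a <= INR (Nat.max a b) <= INR a + 1).
  { intros a b Hab Hba. rewrite <- INR_1, <- plus_INR.
    split; apply le_INR; lia. }
  split; split; [exact Hj| |exact Hj|]; eexists; eexists; split; try reflexivity.
  - apply Hendpoint; assumption.
  - rewrite Nat.max_comm; apply Hendpoint; assumption.
Qed.

Lemma unit_intervals_through_point (x : R) (l : list nat) :
  NoDup l -> (forall n, In n l -> INR n <= x <= INR n + 1) -> (length l <= 2)%nat.
Proof.
  intros Hnd Hin.
  assert (Hclose : forall a b, In a l -> In b l -> (a <= b + 1)%nat).
  { intros a b Ha Hb. apply INR_le. rewrite plus_INR, INR_1.
    pose proof (Hin a Ha); pose proof (Hin b Hb); lra. }
  destruct l as [|a [|b [|c l]]]; simpl; try lia. exfalso.
  apply NoDup_cons_iff in Hnd as [Ha Hnd]; apply NoDup_cons_iff in Hnd as [Hb _].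
  assert (a <> b) by (intros ->; apply Ha; simpl; auto).
  assert (a <> c) by (intros ->; apply Ha; simpl; auto).
  assert (b <> c) by (intros ->; apply Hb; simpl; auto).
  assert (Ina : In a (a :: b :: c :: l)) by (simpl; auto).
  assert (Inb : In b (a :: b :: c :: l)) by (simpl; auto).
  assert (Inc : In c (a :: b :: c :: l)) by (simpl; auto).
  pose proof (Hclose a b Ina Inb); pose proof (Hclose b a Inb Ina);
  pose proof (Hclose a c Ina Inc); pose proof (Hclose c a Inc Ina);
  pose proof (Hclose b c Inb Inc); pose proof (Hclose c b Inc Inb).
  lia.
Qed.

Lemma zigzag_degree_le_2 (d : nat) (p : point) :
  (length (filter (fun h => memb d h p) (zigzag_hypergraph d)) <= 2)%nat.
Proof.
  destruct p as [j x]. unfold zigzag_hypergraph.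
  rewrite filter_map_swap, length_map.
  set (U := filter (fun u => memb d (zigzag_edge d u) (j, x)) (seq 0 (2*d))).
  assert (HU : forall u, In u U ->
                 (u < 2*d)%nat /\ (j < d)%nat /\ INR (slot d j u) <= x <= INR (slot d j u) + 1).
  { intros u Hu. apply filter_In in Hu as [Hs Hm].
    apply in_seq in Hs. apply memb_spec in Hm as [Hj [a [b [Heq Hx]]]].
    simpl in Hj, Heq, Hx. injection Heq as <- <-. split; [lia | split; assumption]. }
  rewrite <- (length_map (slot d j) U).
  apply (unit_intervals_through_point x).
  - apply NoDup_map_NoDup_ForallPairs.
    + intros u v Hu Hv. apply HU in Hu as [Hu [Hj _]]. apply HU in Hv as [Hv _].
      apply slot_injective; assumption.
    + apply NoDup_filter, seq_NoDup.
  - intros n Hn. apply in_map_iff in Hn as [u [<- Hu]]. apply HU; exact Hu.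
Qed.

Definition zigzag_transversal (d : nat) : list point :=
  map (fun i => meet_point d i (d + i)) (seq 0 d).

Lemma zigzag_transversal_spec (d : nat) :
  is_transversal d (zigzag_hypergraph d) (zigzag_transversal d).
Proof.
  intros h Hh. apply in_zigzag_hypergraph in Hh as [u [-> Hu]].
  set (i := if Nat.ltb u d then u else (u - d)%nat).
  assert (Hi : (i < d)%nat /\ (u = i \/ u = d + i)%nat)
    by (unfold i; destruct (Nat.ltb_spec u d); lia).
  exists (meet_point d i (d + i)). split.
  - apply (in_map (fun i => meet_point d i (d + i))), in_seq; lia.
  - destruct (meet_point_mem d i (d + i)) as [Hmi Hmdi]; try lia.
    destruct Hi as [_ [Hui | Hui]]; rewrite Hui; assumption.
Qed.

Theorem mainTheorem14 (d : nat) (hd : (1 <= d)%nat) :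
  exists H : list sepint,
    is_hypergraph d H /\
    nu_eq d H 1 /\ tau_eq d H d /\ tau_star_eq d H (INR d).
Proof.
  exists (zigzag_hypergraph d).
  assert (Hlen : length (zigzag_hypergraph d) = (2*d)%nat)
    by (unfold zigzag_hypergraph; rewrite length_map, length_seq; reflexivity).
  split; [apply zigzag_is_hypergraph|]. split.
  - apply (nu_intersecting d _ (zigzag_edge d 0)).
    + apply in_zigzag_hypergraph; exists 0%nat; split; [reflexivity | lia].
    + intros h1 h2 H1 H2.
      apply in_zigzag_hypergraph in H1 as [u [-> Hu]].
      apply in_zigzag_hypergraph in H2 as [v [-> Hv]].
      exists (meet_point d u v); apply meet_point_mem; assumption.
  - apply (tau_tau_star_sandwich d d _ (zigzag_transversal d)).
    + apply zigzag_transversal_spec.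
    + unfold zigzag_transversal; rewrite length_map, length_seq; reflexivity.
    + intros g Hg.
      pose proof (frac_cover_degree_bound d 2 _ g (zigzag_degree_le_2 d) Hg) as Hbound.
      rewrite Hlen, mult_INR in Hbound. simpl in Hbound. lra.
Qed.
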